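(* Let $\Omega\subset\mathbb{R}^d$ be Borel, $p>1$, $c$ a metric on $\Omega$, $\mathcal A\subset\mathcal P^c_p(\Omega)$, and let $\delta=W_p^c$ on $\mathcal A$. Assume (i) for all $a_0,a_1\in\mathcal A$ the optimal transport problem $\inf_{\gamma\in\Pi(a_0,a_1)}\int c(x,y)^p\,d\gamma$ has at least one minimizer, the set of minimizers being denoted $\Gamma^*_{a_0,a_1}$; and (ii) $\mathcal M(\mathcal A)$ is identifiable. Let $\Gamma(\mathcal A)$ be an admissible set of atom transport plans and $\Gamma_{\mathcal M}(\mathcal A)$ the set of its finite mixtures. Let $\mu_0=\sum_{j=1}^J\lambda_0^ja_0^j$ and $\mu_1=\sum_{k=1}^K\lambda_1^ka_1^k$ be in $\mathcal M(\mathcal A)$ and define $$\widetilde\delta_{\mathcal M,p}(\mu_0,\mu_1)=\Big(\inf_{\gamma\in\Pi(\mu_0,\mu_1)\cap\Gamma_{\mathcal M}(\mathcal A)}\int_{\Omega\times\Omega}c(x,y)^p\,d\gamma(x,y)\Big)^{1/p}.$$ Then $\widetilde\delta_{\mathcal M,p}(\mu_0,\mu_1)=\delta_{\mathcal M,p}(\mu_0,\mu_1)$. Moreover, the set of minimizers of the problem defining $\widetilde\delta_{\mathcal M,p}(\mu_0,\mu_1)$ is equal to the set of measures of the form $\gamma=\sum_{j=1}^J\sum_{k=1}^K w^*_{jk}\gamma_{jk}$ where $w^*$ is a minimizer of the discrete problem defining $\delta_{\mathcal M,p}(\mu_0,\mu_1)$ and $\gamma_{jk}\in\Gamma^*_{a_0^j,a_1^k}$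 for all $j,k$.
   Context: $\mathcal P^c_p(\Omega)$ is the set of probability measures $\mu$ on $\Omega$ with $\int c(x,x_0)^pd\mu(x)<\infty$ for some $x_0$. $\Pi(\mu,\nu)$ is the set of probability measures on $\Omega\times\Omega$ with marginals $\mu,\nu$, and $W_p^c(\mu,\nu)=(\inf_{\gamma\in\Pi(\mu,\nu)}\int c^p d\gamma)^{1/p}$. $\mathcal L_K$ is the probability simplex in $\mathbb{R}^K$. $\mathcal M(\mathcal A)$ is the set of finite mixtures $\sum_{k=1}^K\lambda^ka^k$, $a^k\in\mathcal A$, $(\lambda^k)\in\mathcal L_K$. For such $\mu_0,\mu_1$, $\delta_{\mathcal M,p}(\mu_0,\mu_1)^p=\min_{w}\sum_{j,k}w_{jk}W_p^c(a_0^j,a_1^k)^p$ over $w\in\mathbb{R}_+^{J\times K}$ with row sums $\lambda_0^j$ and column sums $\lambda_1^k$. Identifiability: whenever $\sum_{j=1}^J\lambda_0^ja_0^j=\sum_{k=1}^K\lambda_1^ka_1^k$ with the $a_0^j$ pairwise distinct and the $a_1^k$ pairwise distinct, then $J=K$ and after reordering $\lambda_0^k=\lambda_1^k$, $a_0^k=a_1^k$ for all $k$. An admissible set of atom transport plans is a set $\Gamma(\mathcal A)=\bigcup_{a_0,a_1\in\mathcal A}\Gamma_{a_0,a_1}\subset\mathcal P(\Omega\times\Omega)$ where each $\Gamma_{a_0,a_1}$ is a convex set with $\Gamma^*_{a_0,a_1}\subset\Gamma_{a_0,a_1}\subset\Pi(a_0,a_1)$. $\Gamma_{\mathcal M}(\mathcal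 A)$ is the set of measures $\sum_{k=1}^K\lambda^k\gamma^k$ with $K\in\mathbb{N}^*$, $\gamma^k\in\Gamma(\mathcal A)$, $(\lambda^k)\in\mathcal L_K$. *)

From HB Require Import structures.
From mathcomp Require Import all_boot all_order all_algebra.
From mathcomp Require Import all_classical all_reals all_analysis.
Import numFieldTopology.Exports numFieldNormedType.Exports.
Import Order.TTheory GRing.Theory Num.Theory.

Set Implicit Arguments.
Unset Strict Implicit.
Unset Printing Implicit Defensive.

Local Open Scope classical_set_scope.
Local Open Scope ring_scope.

Definition Rd (R : realType) (d : nat) :=
  g_sigma_algebraType (open : set (set 'rV[R]_d)).

Section OTmixtures.
Context {R : realType} {dT : measure_display} {T : measurableType dT}.

Definition meq {d' : measure_display} {U : measurableType d'}
  (mu nu : set U -> \bar R) : Prop :=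
  forall A, measurable A -> mu A = nu A.

Definition simplex (K : nat) (lam : 'I_K -> R) : Prop :=
  (forall k, 0 <= lam k) /\ \sum_(k < K) lam k = 1.

Definition mix {d' : measure_display} {U : measurableType d'} (K : nat)
  (lam : 'I_K -> R) (a : 'I_K -> set U -> \bar R) : set U -> \bar R :=
  fun A => (\sum_(k < K) (lam k)%:E * a k A)%E.

Definition prob_on (Omega : set T) (mu : probability T R) : Prop :=
  mu (~` Omega) = 0%E.

Definition Pcp (Omega : set T) (c : T -> T -> R) (p : R)
  (mu : probability T R) : Prop :=
  prob_on Omega mu /\
  exists x0, Omega x0 /\
    (\int[mu]_(x in Omega) ((c x x0) `^ p)%:E < +oo)%E.

Definition couplings (Omega : set T) (mu nu : set T -> \bar R) :
  set (probability (T * T)%type R) :=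
  [set g | g (~` (Omega `*` Omega)) = 0%E /\
     forall A, measurable A ->
       g (A `*` setT) = mu A /\ g (setT `*` A) = nu A].

Definition cost (Omega : set T) (c : T -> T -> R) (p : R)
  (g : probability (T * T)%type R) : \bar R :=
  (\int[g]_(z in Omega `*` Omega) ((c z.1 z.2) `^ p)%:E)%E.

Definition Wpp (Omega : set T) (c : T -> T -> R) (p : R)
  (mu nu : set T -> \bar R) : \bar R :=
  ereal_inf [set cost Omega c p g | g in couplings Omega mu nu].

Definition Wp (Omega : set T) (c : T -> T -> R) (p : R)
  (mu nu : set T -> \bar R) : \bar R :=
  (Wpp Omega c p mu nu `^ p^-1)%E.

Definition opt_plans (Omega : set T) (c : T -> T -> R) (p : R)
  (a0 a1 : set T -> \bar R) : set (probability (T * T)%type R) :=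
  [set g | couplings Omega a0 a1 g /\ cost Omega c p g = Wpp Omega c p a0 a1].

Definition identifiable (Aset : set (probability T R)) : Prop :=
  forall (J K : nat) (l0 : 'I_J -> R) (a0 : 'I_J -> probability T R)
         (l1 : 'I_K -> R) (a1 : 'I_K -> probability T R),
    simplex l0 -> (forall j, 0 < l0 j) ->
    simplex l1 -> (forall k, 0 < l1 k) ->
    (forall j, Aset (a0 j)) -> (forall k, Aset (a1 k)) ->
    (forall i j, i != j -> ~ meq (a0 i) (a0 j)) ->
    (forall i j, i != j -> ~ meq (a1 i) (a1 j)) ->
    meq (mix l0 (fun j => a0 j : set T -> \bar R))
        (mix l1 (fun k => a1 k : set T -> \bar R)) ->
    J = K /\
    exists s : 'I_J -> 'I_K, bijective s /\
      forall j, l0 j = l1 (s j) /\ meq (a0 j) (a1 (s j)).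

(** a convex set of probability measures (convex combinations taken as
    measures, i.e. up to equality on measurable sets) *)
Definition convex_set {d' : measure_display} {U : measurableType d'}
  (S : set (probability U R)) : Prop :=
  forall (g1 g2 : probability U R) (t : R), S g1 -> S g2 -> 0 <= t <= 1 ->
    forall g : probability U R,
      meq g (fun A => (t%:E * g1 A + (1 - t)%:E * g2 A)%E) -> S g.

(** admissible set of atom transport plans: the family
    (Gamma_{a0,a1})_{a0,a1 in A}; Gamma(A) is their union *)
Definition admissible (Omega : set T) (c : T -> T -> R) (p : R)
  (Aset : set (probability T R))
  (G : probability T R -> probability T R -> set (probability (T * T)%type R))
  : Prop :=
  forall a0 a1, Aset a0 -> Aset a1 ->
    [/\ convex_set (G a0 a1),
        opt_plans Omega c p a0 a1 `<=` G a0 a1 &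
        G a0 a1 `<=` couplings Omega a0 a1].

Definition Gamma_A (Aset : set (probability T R))
  (G : probability T R -> probability T R -> set (probability (T * T)%type R))
  : set (probability (T * T)%type R) :=
  [set g | exists a0 a1, [/\ Aset a0, Aset a1 & G a0 a1 g]].

Definition Gamma_M (Aset : set (probability T R))
  (G : probability T R -> probability T R -> set (probability (T * T)%type R))
  : set (probability (T * T)%type R) :=
  [set g | exists (L : nat) (nu : 'I_L -> R)
                  (gs : 'I_L -> probability (T * T)%type R),
     [/\ simplex nu, (forall l, Gamma_A Aset G (gs l)) &
         meq g (mix nu (fun l => gs l : set (T * T) -> \bar R))]].

Definition dtilde_pp (Omega : set T) (c : T -> T -> R) (p : R)
  (Aset : set (probability T R))
  (G : probability T R -> probability T R -> set (probability (T * T)%type R))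
  (mu0 mu1 : set T -> \bar R) : \bar R :=
  ereal_inf [set cost Omega c p g | g in
               couplings Omega mu0 mu1 `&` Gamma_M Aset G].

Definition dtilde (Omega : set T) (c : T -> T -> R) (p : R)
  (Aset : set (probability T R))
  (G : probability T R -> probability T R -> set (probability (T * T)%type R))
  (mu0 mu1 : set T -> \bar R) : \bar R :=
  (dtilde_pp Omega c p Aset G mu0 mu1 `^ p^-1)%E.

Definition disc_feasible (J K : nat) (l0 : 'I_J -> R) (l1 : 'I_K -> R)
  (w : 'M[R]_(J, K)) : Prop :=
  [/\ forall j k, 0 <= w j k,
      forall j, \sum_(k < K) w j k = l0 j &
      forall k, \sum_(j < J) w j k = l1 k].

Definition disc_obj (Omega : set T) (c : T -> T -> R) (p : R) (J K : nat)
  (a0 : 'I_J -> probability T R) (a1 : 'I_K -> probability T R)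
  (w : 'M[R]_(J, K)) : \bar R :=
  (\sum_(j < J) \sum_(k < K)
     (w j k)%:E * (Wp Omega c p (a0 j) (a1 k)) `^ p)%E.

(** delta_{M,p}(mu0,mu1)^p  (min over feasible w, written as an inf) *)
Definition dM_pp (Omega : set T) (c : T -> T -> R) (p : R) (J K : nat)
  (l0 : 'I_J -> R) (a0 : 'I_J -> probability T R)
  (l1 : 'I_K -> R) (a1 : 'I_K -> probability T R) : \bar R :=
  ereal_inf [set disc_obj Omega c p a0 a1 w | w in disc_feasible l0 l1].

Definition dM (Omega : set T) (c : T -> T -> R) (p : R) (J K : nat)
  (l0 : 'I_J -> R) (a0 : 'I_J -> probability T R)
  (l1 : 'I_K -> R) (a1 : 'I_K -> probability T R) : \bar R :=
  (dM_pp Omega c p l0 a0 l1 a1 `^ p^-1)%E.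

Definition disc_minimizer (Omega : set T) (c : T -> T -> R) (p : R)
  (J K : nat) (l0 : 'I_J -> R) (a0 : 'I_J -> probability T R)
  (l1 : 'I_K -> R) (a1 : 'I_K -> probability T R) (w : 'M[R]_(J, K)) : Prop :=
  disc_feasible l0 l1 w /\
  disc_obj Omega c p a0 a1 w = dM_pp Omega c p l0 a0 l1 a1.

Definition dtilde_minimizer (Omega : set T) (c : T -> T -> R) (p : R)
  (Aset : set (probability T R))
  (G : probability T R -> probability T R -> set (probability (T * T)%type R))
  (mu0 mu1 : set T -> \bar R) (g : probability (T * T)%type R) : Prop :=
  [/\ couplings Omega mu0 mu1 g, Gamma_M Aset G g &
      cost Omega c p g = dtilde_pp Omega c p Aset G mu0 mu1].

End OTmixtures.

Definition metric_on {T : Type} {R : realType} (Omega : set T)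
  (c : T -> T -> R) : Prop :=
  [/\ forall x y, Omega x -> Omega y -> (c x y = 0 <-> x = y),
      forall x y, Omega x -> Omega y -> c x y = c y x &
      forall x y z, Omega x -> Omega y -> Omega z -> c x z <= c x y + c y z].

From HB Require Import structures.
From mathcomp Require Import all_boot all_order all_algebra.
From mathcomp Require Import all_classical all_reals all_analysis.
From mathcomp Require Import measurable_realfun lra.
Import numFieldTopology.Exports numFieldNormedType.Exports.
Import Order.TTheory GRing.Theory Num.Theory.
Set Implicit Arguments.
Unset Strict Implicit.
Unset Printing Implicit Defensive.
Local Open Scope classical_set_scope.
Local Open Scope ring_scope.

(* A plan gamma in Gamma_M(A) with marginals mu0, mu1 is a mixture
   sum_l nu_l gamma_l of atom plans gamma_l in Pi(b0_l, b1_l).  Its marginals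
   are the mixtures sum_l nu_l b0_l = mu0 and sum_l nu_l b1_l = mu1, so by
   identifiability each class of equal atoms gets the same total weight from
   nu as from lambda_0 (resp. lambda_1).  Spreading nu_l over the atoms a0_j,
   a1_k of the classes of b0_l, b1_l proportionally to their weights gives a
   feasible w with sum_jk w_jk W_p^p(a0_j, a1_k) = sum_l nu_l W_p^p(b0_l, b1_l),
   which is at most the cost of gamma.  Conversely a feasible w together with
   optimal atom plans gives a plan in Gamma_M(A) of cost sum_jk w_jk
   W_p^p(a0_j, a1_k), so the two values coincide.  For a minimizer gamma every
   inequality above is an equality; as all costs are finite (the atoms have
   finite p-th moments), each gamma_l with nu_l > 0 is optimal, and regrouping
   the gamma_l by blocks (j, k) exhibits gamma in the claimed form. *)

Lemma convex_sume_cst {R : realType} (I : finType) (t : I -> R) (x : \bar R) :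
  (forall i, 0 <= t i) -> \sum_i t i = 1 -> (\sum_i (t i)%:E * x)%E = x.
Proof.
move=> t0 t1; rewrite -ge0_sume_distrl; last by move=> i _; rewrite lee_fin.
by rewrite sumEFin t1 mul1e.
Qed.

Lemma mule_eq_on_pos {R : realType} (r : R) (x y : \bar R) :
  0 <= r -> (0 < r -> x = y) -> (r%:E * x = r%:E * y)%E.
Proof.
by rewrite le_eqVlt => /predU1P[<- _|/[swap]/[apply] ->]; rewrite ?mul0e.
Qed.

Lemma lee_sum_eq {R : realDomainType} (I : finType) (x y : I -> \bar R) :
  (forall i, 0 <= x i)%E -> (forall i, x i <= y i)%E ->
  (\sum_i y i < +oo)%E -> (\sum_i y i <= \sum_i x i)%E -> forall i, x i = y i.
Proof.
move=> x0 xy yfin yx i; apply/eqP; rewrite eq_le xy /= leNgt; apply/negP => xy_lt.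
have y0 j : (0 <= y j)%E by apply: le_trans (xy j).
suff : (\sum_i x i < \sum_i y i)%E by rewrite ltNge yx.
rewrite (bigD1 i) //= [X in (_ < X)%E](bigD1 i) //=.
apply: lte_leD => //; last by apply: lee_sum => j _.
rewrite ge0_fin_numE ?sume_ge0 //; apply: le_lt_trans yfin.
apply: (@le_trans _ _ (\sum_(j | j != i) y j)%E); first exact: lee_sum.
by rewrite [X in (_ <= X)%E](bigD1 i) //= leeDr.
Qed.

Lemma powR_le_sum3 {R : realType} (p x u v w : R) :
  0 <= p -> 0 <= u -> 0 <= v -> 0 <= w -> 0 <= x -> x <= u + v + w ->
  x `^ p <= 3 `^ p * (u `^ p + v `^ p + w `^ p).
Proof.
move=> p0 u0 v0 w0 x0 hx; set M := Num.max u (Num.max v w).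
have uM : u <= M by rewrite le_max lexx.
have vM : v <= M by rewrite !le_max lexx orbT.
have wM : w <= M by rewrite !le_max lexx !orbT.
have Mp : M `^ p <= u `^ p + v `^ p + w `^ p.
  have := powR_ge0 u p; have := powR_ge0 v p; have := powR_ge0 w p.
  rewrite /M; case: (leP v w) => _; [case: (leP u w)|case: (leP u v)] => _ *;
    lra.
clearbody M; apply: (@le_trans _ _ ((3 * M) `^ p)).
  by apply: ge0_ler_powR; rewrite ?nnegrE //; lra.
rewrite powRM //; last lra.
by apply: ler_wpM2l => //; exact: powR_ge0.
Qed.

Lemma ge0_integral_comp_le {R : realType} {d1 d2 : measure_display}
    {X : measurableType d1} {Y : measurableType d2}
    (g : {measure set X -> \bar R}) (a : {measure set Y -> \bar R})
    (h : X -> Y) (D : set X) (E : set Y) (f : Y -> \bar R) :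
  measurable_fun setT h -> (forall B, measurable B -> g (h @^-1` B) = a B) ->
  measurable D -> measurable E -> D `<=` h @^-1` E ->
  measurable_fun E f -> (forall y, E y -> (0 <= f y)%E) ->
  (\int[g]_(x in D) f (h x) <= \int[a]_(y in E) f y)%E.
Proof.
move=> mh ga mD mE DE mf f0.
have mhE : measurable (h @^-1` E) by rewrite -[_ @^-1` _]setTI; exact: mh.
rewrite (eq_measure_integral (pushforward g h)); last first.
  by move=> B mB _; rewrite -ga.
rewrite [X in (_ <= X)%E]ge0_integral_pushforward //; last first.
  by move=> y /set_mem; exact: f0.
apply: ge0_subset_integral => //; last by move=> x Ex; exact: f0.
apply: (measurable_comp mE) => //; first by move=> _ [x Ex <-].
exact: measurable_funS mh.
Qed.

(** * Finite mixtures of measures *)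

Section Mixture.
Local Open Scope ereal_scope.
Context {R : realType} {dU : measure_display} {U : measurableType dU}.

(* Defined by recursion so that it inherits the measure structure of
   [measure_add] and [mscale]. *)
Fixpoint mixture_seq (I : Type) (t : I -> {nonneg R})
    (P : I -> {measure set U -> \bar R}) (s : seq I) :
    {measure set U -> \bar R} :=
  if s is i :: s' then measure_add (mscale (t i) (P i)) (mixture_seq t P s')
  else mzero.

Lemma mixture_seqE (I : Type) (t : I -> {nonneg R})
    (P : I -> {measure set U -> \bar R}) s A :
  mixture_seq t P s A = \sum_(i <- s) (t i)%:num%:E * P i A.
Proof.
elim: s => [|i s IH] /=; first by rewrite big_nil.
by rewrite /msum 2!big_ord_recl big_ord0 adde0 big_cons IH.
Qed.

Lemma ge0_integral_mixture_seq (I : Type) (t : I -> {nonneg R})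
    (P : I -> {measure set U -> \bar R}) s (D : set U) (f : U -> \bar R) :
  measurable D -> (forall x, D x -> 0 <= f x) -> measurable_fun D f ->
  \int[mixture_seq t P s]_(x in D) f x =
  \sum_(i <- s) (t i)%:num%:E * \int[P i]_(x in D) f x.
Proof.
move=> mD f0 mf; elim: s => [|i s IH] /=.
  by rewrite big_nil integral_measure_zero.
by rewrite ge0_integral_measure_add // big_cons IH ge0_integral_mscale.
Qed.

Section FiniteMixture.
Variables (I : finType) (t : I -> R) (t0 : forall i, (0 <= t i)%R).
Variable P : I -> {measure set U -> \bar R}.

Definition mixture A := mixture_seq (fun i => NngNum (t0 i)) P (index_enum I) A.

Let mixture0 : mixture set0 = 0. Proof. exact: measure0. Qed.
Let mixture_ge0 A : 0 <= mixture A. Proof. exact: measure_ge0. Qed.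
Let mixture_sigma_additive : semi_sigma_additive mixture.
Proof. exact: measure_semi_sigma_additive. Qed.

HB.instance Definition _ := isMeasure.Build _ _ _ mixture
  mixture0 mixture_ge0 mixture_sigma_additive.

Lemma mixtureE A : mixture A = \sum_i (t i)%:E * P i A.
Proof. exact: mixture_seqE. Qed.

Lemma ge0_integral_mixture (g : {measure set U -> \bar R}) (D : set U)
    (f : U -> \bar R) :
  meq g mixture -> measurable D -> (forall x, D x -> 0 <= f x) ->
  measurable_fun D f ->
  \int[g]_(x in D) f x = \sum_i (t i)%:E * \int[P i]_(x in D) f x.
Proof.
move=> gE mD f0 mf; rewrite (eq_measure_integral mixture).
  exact: ge0_integral_mixture_seq.
by move=> A mA _; rewrite gE.
Qed.

End FiniteMixture.

Lemma mixture_probability_exists (I : finType) (t : I -> R)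
    (P : I -> probability U R) :
  (forall i, 0 <= t i)%R -> (\sum_i t i = 1)%R ->
  exists g : probability U R, forall A, g A = \sum_i (t i)%:E * P i A.
Proof.
move=> t0 t1.
have m1 : mixture t0 P setT = 1.
  rewrite mixtureE (eq_bigr (fun i => (t i)%:E)); last first.
    by move=> i _; rewrite [X in _ * X]probability_setT mule1.
  by rewrite sumEFin t1.
exists (HB.pack_for (probability U R) (mixture t0 P)
          (Measure_isProbability.Build _ _ _ (mixture t0 P) m1)).
exact: mixtureE.
Qed.

End Mixture.

(** * Class weights *)

Section ClassWeights.
Variables (R : realFieldType) (X : Type) (e : rel X).
Hypotheses (e_refl : reflexive e) (e_sym : symmetric e) (e_trans : transitive e).

Definition class_weight (I : finType) (t : I -> R) (b : I -> X) (x : X) : R :=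
  \sum_(i | e (b i) x) t i.

Lemma class_weight_compat (I : finType) (t : I -> R) (b : I -> X) x y :
  e x y -> class_weight t b x = class_weight t b y.
Proof.
move=> xy; apply: eq_bigl => i; apply/idP/idP => bi; first exact: e_trans bi xy.
by apply: e_trans bi _; rewrite e_sym.
Qed.

Lemma class_weight_ge (I : finType) (t : I -> R) (b : I -> X) i :
  (forall i, 0 <= t i) -> t i <= class_weight t b (b i).
Proof.
move=> t0; rewrite /class_weight (bigD1 i) //= lerDl.
by apply: sumr_ge0 => j _; exact: t0.
Qed.

Section Splitting.
Variables (L I : finType) (nu : L -> R) (b : L -> X) (lam : I -> R) (a : I -> X).
Hypotheses (nu0 : forall l, 0 <= nu l) (lam0 : forall i, 0 <= lam i).
Hypothesis nu_lam : forall x, class_weight nu b x = class_weight lam a x.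

(* The weight nu l is spread over the items of the class of b l, in
   proportion to lam; that class has positive total weight whenever nu l > 0. *)
Definition split_weight l i : R :=
  (e (b l) (a i))%:R * (lam i / class_weight lam a (a i)).

Lemma split_weight_ge0 l i : 0 <= split_weight l i.
Proof. by rewrite mulr_ge0 ?divr_ge0 ?sumr_ge0. Qed.

Lemma split_weight_neq0 l i : split_weight l i != 0 -> e (b l) (a i).
Proof. by rewrite /split_weight; case: (e _ _); rewrite ?mul0r ?eqxx. Qed.

Lemma sum_split_weight l : 0 < nu l -> \sum_i split_weight l i = 1.
Proof.
move=> nu_gt0; have W_gt0 : 0 < class_weight lam a (b l).
  by rewrite -nu_lam; apply: lt_le_trans nu_gt0 (class_weight_ge _ _ nu0).
rewrite -(divff (lt0r_neq0 W_gt0)) [X in X / _]big_mkcond mulr_suml.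
apply: eq_bigr => i _; rewrite /split_weight [e (b l) (a i)]e_sym.
have [bai|_] := boolP (e (a i) (b l)); last by rewrite !mul0r.
by rewrite mul1r (class_weight_compat lam a bai).
Qed.

Lemma mul_sum_split_weight l : nu l * \sum_i split_weight l i = nu l.
Proof.
have := nu0 l; rewrite le_eqVlt => /predU1P[<-|nu_gt0]; first by rewrite mul0r.
by rewrite sum_split_weight ?mulr1.
Qed.

Lemma sum_nu_split_weight i : \sum_l nu l * split_weight l i = lam i.
Proof.
set W := class_weight lam a (a i).
have -> : \sum_l nu l * split_weight l i = class_weight nu b (a i) * (lam i / W).
  rewrite [X in X * _]big_mkcond mulr_suml; apply: eq_bigr => l _.
  by rewrite /split_weight; case: (e _ _); rewrite ?mul0r ?mulr0 ?mul1r.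
rewrite nu_lam -/W; have [W0|W_neq0] := eqVneq W 0; last by rewrite mulrC divfK.
have := class_weight_ge a i lam0; rewrite -/W W0 => lam_le0.
by rewrite mul0r; apply/esym/le_anti; rewrite lam_le0 lam0.
Qed.

Lemma sum_eq_of_class_weight : \sum_l nu l = \sum_i lam i.
Proof.
under [RHS]eq_bigr do rewrite -sum_nu_split_weight.
rewrite exchange_big; apply: eq_bigr => l _.
by rewrite -mulr_sumr mul_sum_split_weight.
Qed.

Lemma sume_class_invariant (F : X -> \bar R) :
  (forall x y, e x y -> F x = F y) -> (forall x, (0 <= F x)%E) ->
  (\sum_l (nu l)%:E * F (b l) = \sum_i (lam i)%:E * F (a i))%E.
Proof.
move=> Fe F0.
have nuE l : ((nu l)%:E * F (b l) =
    \sum_i (nu l * split_weight l i)%:E * F (b l))%E.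
  transitivity ((nu l * \sum_i split_weight l i)%:E * F (b l))%E.
    by rewrite mul_sum_split_weight.
  rewrite mulr_sumr -sumEFin ge0_sume_distrl // => i _.
  by rewrite lee_fin mulr_ge0 ?split_weight_ge0.
have lamE i : ((lam i)%:E * F (a i) =
    \sum_l (nu l * split_weight l i)%:E * F (a i))%E.
  rewrite -{1}sum_nu_split_weight -sumEFin ge0_sume_distrl // => l _.
  by rewrite lee_fin mulr_ge0 ?split_weight_ge0.
rewrite (eq_bigr _ (fun l _ => nuE l)) [RHS](eq_bigr _ (fun i _ => lamE i)).
rewrite exchange_big; apply: eq_bigr => i _; apply: eq_bigr => l _.
have [s0|/split_weight_neq0/Fe -> //] := eqVneq (split_weight l i) 0.
by rewrite s0 mulr0 !mul0e.
Qed.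

End Splitting.

Section Gluing.
Variables (L J K : finType) (nu : L -> R) (b0 b1 : L -> X).
Variables (l0 : J -> R) (a0 : J -> X) (l1 : K -> R) (a1 : K -> X).
Hypotheses (nu0 : forall l, 0 <= nu l) (l00 : forall j, 0 <= l0 j)
  (l10 : forall k, 0 <= l1 k).
Hypotheses (nu_l0 : forall x, class_weight nu b0 x = class_weight l0 a0 x)
  (nu_l1 : forall x, class_weight nu b1 x = class_weight l1 a1 x).

Definition glue_weight l j k : R :=
  nu l * split_weight b0 l0 a0 l j * split_weight b1 l1 a1 l k.

Lemma glue_weight_ge0 l j k : 0 <= glue_weight l j k.
Proof. by rewrite !mulr_ge0 // invr_ge0 sumr_ge0. Qed.

Lemma glue_weight_neq0 l j k :
  glue_weight l j k != 0 -> e (b0 l) (a0 j) /\ e (b1 l) (a1 k).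
Proof.
move=> g_neq0; split.
  apply: (split_weight_neq0 (lam := l0)); apply: contraNneq g_neq0 => s0.
  by rewrite /glue_weight s0 mulr0 mul0r.
apply: (split_weight_neq0 (lam := l1)); apply: contraNneq g_neq0 => s1.
by rewrite /glue_weight s1 mulr0.
Qed.

Lemma sum_glue_weight l : \sum_j \sum_k glue_weight l j k = nu l.
Proof.
under eq_bigr do rewrite -mulr_sumr mulrAC mul_sum_split_weight //.
by rewrite -mulr_sumr mul_sum_split_weight.
Qed.

Lemma sum_glue_weight_row j : \sum_k \sum_l glue_weight l j k = l0 j.
Proof.
rewrite exchange_big -(sum_nu_split_weight l00 nu_l0 j) /=.
by apply: eq_bigr => l _; rewrite -mulr_sumr mulrAC mul_sum_split_weight.
Qed.

Lemma sum_glue_weight_col k : \sum_j \sum_l glue_weight l j k = l1 k.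
Proof.
rewrite exchange_big -(sum_nu_split_weight l10 nu_l1 k) /=.
apply: eq_bigr => l _; rewrite -mulr_suml -mulr_sumr.
by rewrite mul_sum_split_weight.
Qed.

Lemma sume_glue_weight (H : L -> \bar R) : (forall l, (0 <= H l)%E) ->
  (\sum_j \sum_k \sum_l (glue_weight l j k)%:E * H l =
   \sum_l (nu l)%:E * H l)%E.
Proof.
move=> H0; under eq_bigr do rewrite exchange_big.
rewrite exchange_big; apply: eq_bigr => l _.
rewrite -sum_glue_weight -sumEFin ge0_sume_distrl; last first.
  by move=> j _; rewrite lee_fin sumr_ge0 // => k _; exact: glue_weight_ge0.
apply: eq_bigr => j _; rewrite -sumEFin ge0_sume_distrl // => k _.
by rewrite lee_fin glue_weight_ge0.
Qed.

End Gluing.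

Section Reduction.
Variables (n : nat) (t : 'I_n -> R) (b : 'I_n -> X).
Hypothesis t0 : forall l, 0 <= t l.

(* One representative for each class of positive weight. *)
Definition first_of_class : pred 'I_n := fun l =>
  (0 < t l) && [forall r, (0 < t r) && e (b r) (b l) ==> (l <= r)%N].

Lemma exists_first_of_class l :
  0 < t l -> exists2 r, first_of_class r & e (b r) (b l).
Proof.
move=> tl; pose P r := (0 < t r) && e (b r) (b l).
have Pl : P l by rewrite /P tl e_refl.
case: (arg_minnP val Pl) => r /andP[tr rl] rmin.
exists r => //; rewrite /first_of_class tr; apply/forallP => r'.
by apply/implyP => /andP[tr' r'r]; apply: rmin; rewrite /P tr' (e_trans r'r rl).
Qed.

Lemma first_of_class_inj r1 r2 : first_of_class r1 -> first_of_class r2 ->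
  e (b r1) (b r2) -> r1 = r2.
Proof.
move=> /andP[t1 /forallP min1] /andP[t2 /forallP min2] e12.
apply/val_inj/eqP; rewrite eqn_leq.
rewrite (implyP (min1 r2)) ?t2 1?e_sym //=.
by rewrite (implyP (min2 r1)) ?t1.
Qed.

Lemma class_reduction : exists m (lam : 'I_m -> R) (s : 'I_m -> 'I_n),
  [/\ forall i, 0 < lam i,
      forall i j, e (b (s i)) (b (s j)) -> i = j &
      forall x, class_weight t b x = class_weight lam (b \o s) x].
Proof.
pose s : 'I_#|first_of_class| -> 'I_n := enum_val.
have s_first i : first_of_class (s i) := @enum_valP _ first_of_class i.
have s_inj i j : e (b (s i)) (b (s j)) -> i = j.
  by move=> eij; apply: enum_val_inj; exact: first_of_class_inj.
exists #|first_of_class|, (fun i => class_weight t b (b (s i))), s.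
split=> // [i|x].
  have /andP[ts _] := s_first i.
  by apply: (lt_le_trans ts); exact: class_weight_ge.
have [[i0 ei0]|none] := pselect (exists i0, e (b (s i0)) x).
  rewrite -(class_weight_compat t b ei0) {2}/class_weight.
  rewrite (big_pred1 i0) // => i /=; apply/idP/eqP => [eix|-> //].
  by apply: s_inj; apply: e_trans eix _; rewrite e_sym.
rewrite /class_weight [RHS]big1 => [|i eix]; last by case: none; exists i.
apply: big1 => l elx; have := t0 l; rewrite le_eqVlt => /predU1P[//|tl].
have [r rF erl] := exists_first_of_class tl.
case: none; exists (enum_rank_in rF r); rewrite /s enum_rankK_in //.
exact: e_trans erl elx.
Qed.

End Reduction.

End ClassWeights.

(** * Couplings and transport costs *)

Section TransportPlans.
Local Open Scope ereal_scope.
Context {R : realType} {dT : measure_display} {T : measurableType dT}.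
Variables (Omega : set T) (c : T -> T -> R) (p : R).

Lemma couplings_meq (mu mu' nu nu' : set T -> \bar R) g :
  meq mu mu' -> meq nu nu' ->
  couplings Omega mu nu g -> couplings Omega mu' nu' g.
Proof.
move=> e0 e1 [gO gm]; split => // A mA.
by have [-> ->] := gm A mA; rewrite e0 // e1.
Qed.

Lemma Wpp_meq (mu mu' nu nu' : set T -> \bar R) :
  meq mu mu' -> meq nu nu' -> Wpp Omega c p mu nu = Wpp Omega c p mu' nu'.
Proof.
move=> e0 e1; rewrite /Wpp; congr ereal_inf.
apply/seteqP; split => _ [g gc <-]; exists g => //.
  exact: couplings_meq gc.
by apply: couplings_meq gc => A mA; rewrite ?e0 ?e1.
Qed.

Lemma opt_plans_meq (mu mu' nu nu' : set T -> \bar R) g :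
  meq mu mu' -> meq nu nu' ->
  opt_plans Omega c p mu nu g -> opt_plans Omega c p mu' nu' g.
Proof.
move=> e0 e1 [gc gW]; split; first exact: couplings_meq gc.
by rewrite gW; exact: Wpp_meq.
Qed.

Lemma cost_ge0 g : 0 <= cost Omega c p g.
Proof. by apply: integral_ge0 => z _; rewrite lee_fin powR_ge0. Qed.

Lemma Wpp_ge0 (mu nu : set T -> \bar R) : 0 <= Wpp Omega c p mu nu.
Proof. by apply/ereal_infP => _ [g _ <-]; exact: cost_ge0. Qed.

Lemma poweR_Wp (mu nu : set T -> \bar R) : p != 0%R ->
  Wp Omega c p mu nu `^ p = Wpp Omega c p mu nu.
Proof. by move=> p0; rewrite /Wp -poweRrM mulVf ?poweRe1 ?Wpp_ge0. Qed.

Hypothesis mO : measurable Omega.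
Hypothesis mc : measurable_fun (Omega `*` Omega) (fun z : T * T => c z.1 z.2).

Lemma measurable_cost_integrand :
  measurable_fun (Omega `*` Omega) (fun z : T * T => ((c z.1 z.2) `^ p)%:E).
Proof.
by apply/measurable_EFinP; exact: (measurableT_comp (measurable_powR p) mc).
Qed.

Lemma cost_mixture (I : finType) (t : I -> R)
    (P : I -> probability (T * T)%type R) (g : probability (T * T)%type R) :
  (forall i, 0 <= t i)%R -> meq g (fun A => \sum_i (t i)%:E * P i A) ->
  cost Omega c p g = \sum_i (t i)%:E * cost Omega c p (P i).
Proof.
move=> t0 gE; apply: (ge0_integral_mixture (t0 := t0)) => //.
- by move=> A mA; rewrite mixtureE [LHS]gE.
- exact: measurableX.
- by move=> z _; rewrite lee_fin powR_ge0.
- exact: measurable_cost_integrand.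
Qed.

Lemma couplings_mixture (I : finType) (t : I -> R)
    (P : I -> probability (T * T)%type R) (a b : I -> set T -> \bar R)
    (g : probability (T * T)%type R) :
  (forall i, 0 <= t i)%R ->
  (forall i, (0 < t i)%R -> couplings Omega (a i) (b i) (P i)) ->
  meq g (fun A => \sum_i (t i)%:E * P i A) ->
  couplings Omega (fun A => \sum_i (t i)%:E * a i A)
                  (fun A => \sum_i (t i)%:E * b i A) g.
Proof.
move=> t0 hP gE; split.
  rewrite gE; last by apply: measurableC; exact: measurableX.
  apply: big1 => i _; rewrite -(mule0 (t i)%:E).
  by apply: mule_eq_on_pos => // /hP[].
move=> A mA; rewrite !gE; try exact: measurableX.
by split; apply: eq_bigr => i _; apply: mule_eq_on_pos => // /hP[_ /(_ A mA)[]].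
Qed.

Lemma opt_plans_mixture (I : finType) (t : I -> R)
    (P : I -> probability (T * T)%type R) (a b : probability T R)
    (g : probability (T * T)%type R) :
  (forall i, 0 <= t i)%R -> (\sum_i t i = 1)%R ->
  (forall i, (0 < t i)%R -> opt_plans Omega c p a b (P i)) ->
  meq g (fun A => \sum_i (t i)%:E * P i A) ->
  opt_plans Omega c p a b g.
Proof.
move=> t0 t1 hP gE; split.
  apply: (@couplings_meq (fun A => \sum_i (t i)%:E * a A) _
                         (fun A => \sum_i (t i)%:E * b A)).
  - by move=> A _; rewrite convex_sume_cst.
  - by move=> A _; rewrite convex_sume_cst.
  by apply: (couplings_mixture t0 _ gE) => i /hP[].
rewrite (cost_mixture t0 gE) -[RHS](convex_sume_cst _ t0 t1).
by apply: eq_bigr => i _; apply: mule_eq_on_pos => // /hP[].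
Qed.

End TransportPlans.

Section FiniteCost.
Local Open Scope ereal_scope.
Context {R : realType} {dT : measure_display} {T : measurableType dT}.
Variables (Omega : set T) (c : T -> T -> R) (p : R).
Hypotheses (mO : measurable Omega) (p0 : (0 <= p)%R) (hmet : metric_on Omega c).
Hypothesis mc : measurable_fun (Omega `*` Omega) (fun z : T * T => c z.1 z.2).

Lemma metric_on_ge0 x y : Omega x -> Omega y -> (0 <= c x y)%R.
Proof.
case: hmet => c0 cC cT Ox Oy.
by have := cT x y x Ox Oy Ox; rewrite (proj2 (c0 x x Ox Ox) erefl) cC //; lra.
Qed.

Lemma metric_powR_le3 x y x0 x1 :
  Omega x -> Omega y -> Omega x0 -> Omega x1 ->
  (c x y `^ p <= 3 `^ p * (c x x0 `^ p + c x0 x1 `^ p + c y x1 `^ p))%R.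
Proof.
move=> Ox Oy Ox0 Ox1; have [_ cC cT] := hmet.
apply: powR_le_sum3; rewrite ?metric_on_ge0 //.
have := cT x x0 y Ox Ox0 Oy; have := cT x0 x1 y Ox0 Ox1 Oy.
by rewrite [c x1 y]cC //; lra.
Qed.

Lemma measurable_cost_section x0 : Omega x0 ->
  measurable_fun Omega (fun x => ((c x x0) `^ p)%:E).
Proof.
move=> Ox0; apply: (measurable_comp (F := Omega `*` Omega)
  (f := fun z : T * T => ((c z.1 z.2) `^ p)%:E) (g := pair^~ x0)).
- exact: measurableX.
- by move=> _ [x Ox <-].
- exact: measurable_cost_integrand.
- exact: measurable_funS (pair2_measurable x0).
Qed.

Lemma product_couplings (a b : probability T R) :
  prob_on Omega a -> prob_on Omega b -> couplings Omega a b (a \x b).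
Proof.
move=> Oa Ob; have mC : measurable (~` Omega) by exact: measurableC.
have abX A B : measurable A -> measurable B ->
    (a \x b : probability (T * T)%type R) (A `*` B) = a A * b B.
  by move=> mA mB; exact: product_measure1E.
split=> [|A mA]; last by rewrite !abX // !probability_setT mule1 mul1e.
apply/eqP; rewrite eq_le measure_ge0 andbT.
apply: (@le_trans _ _ ((a \x b : probability (T * T)%type R)
                          (~` Omega `*` setT `|` setT `*` ~` Omega))).
  apply: le_measure; rewrite ?inE.
  - by apply: measurableC; exact: measurableX.
  - by apply: measurableU; exact: measurableX.
  - move=> [x y] /= xy; have [Ox|] := pselect (Omega x); last by left.
    by right; split=> // Oy; exact: xy.
apply: le_trans (measureU2 _ _ _) _; try exact: measurableX.
by rewrite [X in X + _]abX // [X in _ + X]abX // Oa Ob mul0e mule0 adde0.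
Qed.

Lemma measurable_fun_fst_setX (f : T -> \bar R) : measurable_fun Omega f ->
  measurable_fun (Omega `*` Omega) (fun z : T * T => f z.1).
Proof.
move=> mf; apply: (measurable_comp mO) => //; first by move=> _ [z [Oz _] <-].
exact: measurable_funS measurable_fst.
Qed.

Lemma measurable_fun_snd_setX (f : T -> \bar R) : measurable_fun Omega f ->
  measurable_fun (Omega `*` Omega) (fun z : T * T => f z.2).
Proof.
move=> mf; apply: (measurable_comp mO) => //; first by move=> _ [z [_ Oz] <-].
exact: measurable_funS measurable_snd.
Qed.

Lemma couplings_integral_fst_le (a b : probability T R)
    (g : probability (T * T)%type R) (f : T -> \bar R) :
  couplings Omega a b g -> measurable_fun Omega f -> (forall x, 0 <= f x) ->
  \int[g]_(z in Omega `*` Omega) f z.1 <= \int[a]_(x in Omega) f x.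
Proof.
move=> [_ gab] mf f0; apply: (ge0_integral_comp_le measurable_fst) => //.
- move=> B mB; have -> : fst @^-1` B = B `*` setT :> set (T * T).
    by apply/seteqP; split=> -[x y] /=; [split|case].
  exact: (gab B mB).1.
- exact: measurableX.
- by move=> -[x y] [].
Qed.

Lemma couplings_integral_snd_le (a b : probability T R)
    (g : probability (T * T)%type R) (f : T -> \bar R) :
  couplings Omega a b g -> measurable_fun Omega f -> (forall x, 0 <= f x) ->
  \int[g]_(z in Omega `*` Omega) f z.2 <= \int[b]_(x in Omega) f x.
Proof.
move=> [_ gab] mf f0; apply: (ge0_integral_comp_le measurable_snd) => //.
- move=> B mB; have -> : snd @^-1` B = setT `*` B :> set (T * T).
    by apply/seteqP; split=> -[x y] /=; [split|case].
  exact: (gab B mB).2.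
- exact: measurableX.
- by move=> -[x y] [].
Qed.

Lemma cost_lt_pinfty (a b : probability T R) (g : probability (T * T)%type R) :
  Pcp Omega c p a -> Pcp Omega c p b -> couplings Omega a b g ->
  cost Omega c p g < +oo.
Proof.
move=> [_ [x0 [Ox0 ha]]] [_ [x1 [Ox1 hb]]] gc.
have mOO : measurable (Omega `*` Omega) by exact: measurableX.
pose f0 x := ((c x x0) `^ p)%:E; pose f1 y := ((c y x1) `^ p)%:E.
pose K := ((c x0 x1) `^ p)%:E.
have f0_ge0 x : 0 <= f0 x by rewrite lee_fin powR_ge0.
have f1_ge0 x : 0 <= f1 x by rewrite lee_fin powR_ge0.
have mf0 := measurable_cost_section Ox0; have mf1 := measurable_cost_section Ox1.
have mf0fst := measurable_fun_fst_setX mf0.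
have mf1snd := measurable_fun_snd_setX mf1.
have int_f0 : \int[g]_(z in Omega `*` Omega) f0 z.1 < +oo.
  exact: le_lt_trans (couplings_integral_fst_le gc mf0 f0_ge0) ha.
have int_f1 : \int[g]_(z in Omega `*` Omega) f1 z.2 < +oo.
  exact: le_lt_trans (couplings_integral_snd_le gc mf1 f1_ge0) hb.
apply: (@le_lt_trans _ _ (\int[g]_(z in Omega `*` Omega)
    ((3 `^ p)%:E * (f0 z.1 + K + f1 z.2)))).
  apply: ge0_le_integral => //.
  - by move=> z _; rewrite lee_fin powR_ge0.
  - exact: measurable_cost_integrand.
  - apply: emeasurable_funM => //.
    by apply: emeasurable_funD => //; exact: emeasurable_funD.
  - move=> [x y] [/= Ox Oy]; rewrite -!EFinD -EFinM lee_fin.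
    exact: metric_powR_le3.
rewrite ge0_integralZl //; last 2 first.
- by apply: emeasurable_funD => //; exact: emeasurable_funD.
- by move=> z _; rewrite !adde_ge0 ?lee_fin ?powR_ge0.
apply: lte_mul_pinfty; rewrite ?lee_fin ?powR_ge0 //.
rewrite ge0_integralD //; last 2 first.
- by move=> z _; rewrite adde_ge0 ?lee_fin ?powR_ge0.
- exact: emeasurable_funD.
rewrite ge0_integralD ?lee_fin ?powR_ge0 // integral_cst //.
apply: lte_add_pinfty => //; apply: lte_add_pinfty => //.
apply: lte_mul_pinfty; rewrite ?lee_fin ?powR_ge0 //.
by apply: le_lt_trans (probability_le1 _ mOO) _; rewrite ltry.
Qed.

Lemma Wpp_lt_pinfty (a b : probability T R) :
  Pcp Omega c p a -> Pcp Omega c p b -> Wpp Omega c p a b < +oo.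
Proof.
move=> Pa Pb; have ab := product_couplings Pa.1 Pb.1.
apply: le_lt_trans (cost_lt_pinfty Pa Pb ab).
by apply: ereal_inf_lbound; exists (a \x b).
Qed.

End FiniteCost.

(** * Mixtures of identifiable atoms *)

Section MeasureClasses.
Local Open Scope ereal_scope.
Context {R : realType} {dT : measure_display} {T : measurableType dT}.

Definition meqb (mu nu : probability T R) : bool := `[< meq mu nu >].

Lemma meqbP (mu nu : probability T R) : reflect (meq mu nu) (meqb mu nu).
Proof. exact: asboolP. Qed.

Lemma meqb_refl : reflexive meqb.
Proof. by move=> mu; apply/meqbP. Qed.

Lemma meqb_sym : symmetric meqb.
Proof. by move=> mu nu; apply/meqbP/meqbP => h A mA; rewrite h. Qed.

Lemma meqb_trans : transitive meqb.
Proof.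
by move=> nu mu xi /meqbP h1 /meqbP h2; apply/meqbP => A mA; rewrite h1 // h2.
Qed.

Lemma meq_mix_of_class_weight n m (nu : 'I_n -> R) (b : 'I_n -> probability T R)
    (lam : 'I_m -> R) (a : 'I_m -> probability T R) :
  (forall l, 0 <= nu l)%R -> (forall i, 0 <= lam i)%R ->
  (forall x, class_weight meqb nu b x = class_weight meqb lam a x) ->
  meq (mix nu (fun l => b l : set T -> \bar R))
      (mix lam (fun i => a i : set T -> \bar R)).
Proof.
move=> nu0 lam0 nu_lam A mA; rewrite /mix.
apply: (sume_class_invariant meqb_refl meqb_sym meqb_trans nu0 lam0 nu_lam
  (F := fun x : probability T R => x A)) => [x y /meqbP xy|x].
  exact: xy.
exact: measure_ge0.
Qed.

Lemma mix_reduction (Aset : set (probability T R)) n (nu : 'I_n -> R)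
    (b : 'I_n -> probability T R) :
  simplex nu -> (forall l, Aset (b l)) ->
  exists m (lam : 'I_m -> R) (a : 'I_m -> probability T R),
    [/\ simplex lam, (forall i, 0 < lam i)%R, (forall i, Aset (a i)),
        (forall i j, i != j -> ~ meq (a i) (a j)) &
        forall x, class_weight meqb nu b x = class_weight meqb lam a x].
Proof.
move=> [nu0 nu1] Ab.
have [m [lam [s [lam_gt0 s_inj nu_lam]]]] :=
  class_reduction meqb_refl meqb_sym meqb_trans b nu0.
have lam0 i : (0 <= lam i)%R by exact: ltW.
exists m, lam, (b \o s); split=> //.
- split=> //; rewrite -nu1; apply/esym.
  exact: (sum_eq_of_class_weight meqb_refl meqb_sym meqb_trans nu0 lam0 nu_lam).
- by move=> i; exact: Ab.
- by move=> i j /[swap] /meqbP /s_inj ->; rewrite eqxx.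
Qed.

Lemma identifiable_class_weight (Aset : set (probability T R)) :
  identifiable Aset ->
  forall n1 (nu1 : 'I_n1 -> R) (b1 : 'I_n1 -> probability T R)
         n2 (nu2 : 'I_n2 -> R) (b2 : 'I_n2 -> probability T R),
  simplex nu1 -> simplex nu2 ->
  (forall l, Aset (b1 l)) -> (forall l, Aset (b2 l)) ->
  meq (mix nu1 (fun l => b1 l : set T -> \bar R))
      (mix nu2 (fun l => b2 l : set T -> \bar R)) ->
  forall x, class_weight meqb nu1 b1 x = class_weight meqb nu2 b2 x.
Proof.
move=> hid n1 nu1 b1 n2 nu2 b2 s1 s2 Ab1 Ab2 e12 x.
have [m1 [lam1 [a1 [sl1 pl1 Aa1 d1 cw1]]]] := mix_reduction s1 Ab1.
have [m2 [lam2 [a2 [sl2 pl2 Aa2 d2 cw2]]]] := mix_reduction s2 Ab2.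
have e : meq (mix lam1 (fun i => a1 i : set T -> \bar R))
             (mix lam2 (fun i => a2 i : set T -> \bar R)).
  move=> A mA; rewrite -(meq_mix_of_class_weight s1.1 sl1.1 cw1) //.
  by rewrite e12 // (meq_mix_of_class_weight s2.1 sl2.1 cw2).
have [_ [s [s_bij ls]]] := hid _ _ _ _ _ _ sl1 pl1 sl2 pl2 Aa1 Aa2 d1 d2 e.
rewrite cw1 cw2 /class_weight (reindex s); last exact: onW_bij.
apply: eq_big => i; last by rewrite (ls i).1.
have /meqbP a12 := (ls i).2.
by apply/idP/idP; apply: meqb_trans; rewrite // meqb_sym.
Qed.

End MeasureClasses.

(** * Plans in Gamma_M(A) *)

Lemma Gamma_M_mixture {R : realType} {dT : measure_display}
    {T : measurableType dT} (Aset : set (probability T R))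
    (G : probability T R -> probability T R -> set (probability (T * T)%type R))
    (I : finType) (t : I -> R) (P : I -> probability (T * T)%type R)
    (g : probability (T * T)%type R) :
  (forall i, 0 <= t i) -> \sum_i t i = 1 -> (forall i, Gamma_A Aset G (P i)) ->
  meq g (fun A => \sum_i (t i)%:E * P i A)%E -> Gamma_M Aset G g.
Proof.
move=> t0 t1 PG gE; pose e (l : 'I_#|I|) := enum_val l.
have e_bij : {on predT, bijective e} by apply: onW_bij; exact: enum_val_bij.
exists #|I|, (t \o e), (P \o e); split=> //.
- by split=> [l|]; [exact: t0 | rewrite -t1 [RHS](reindex e)].
- by move=> l; exact: PG.
- by move=> A mA; rewrite gE // /mix [LHS](reindex e).
Qed.

Lemma disc_feasible_sum {R : realType} (J K : nat) (l0 : 'I_J -> R)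
    (l1 : 'I_K -> R) (w : 'M[R]_(J, K)) :
  simplex l0 -> disc_feasible l0 l1 w ->
  \sum_(q : 'I_J * 'I_K) w q.1 q.2 = 1.
Proof.
move=> [_ <-] [_ w_row _]; rewrite -pair_bigA /=.
by apply: eq_bigr => j _; rewrite w_row.
Qed.

Section Transport.
Local Open Scope ereal_scope.
Context {R : realType} {dT : measure_display} {T : measurableType dT}.
Variables (Omega : set T) (c : T -> T -> R) (p : R)
  (Aset : set (probability T R))
  (G : probability T R -> probability T R -> set (probability (T * T)%type R))
  (J K : nat) (l0 : 'I_J -> R) (a0 : 'I_J -> probability T R)
  (l1 : 'I_K -> R) (a1 : 'I_K -> probability T R).
Hypotheses (mO : measurable Omega) (p1 : (1 < p)%R) (hmet : metric_on Omega c)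
  (mc : measurable_fun (Omega `*` Omega) (fun z : T * T => c z.1 z.2))
  (hP : Aset `<=` Pcp Omega c p)
  (hopt : forall b0 b1, Aset b0 -> Aset b1 ->
     exists g, opt_plans Omega c p b0 b1 g)
  (hid : identifiable Aset) (hadm : admissible Omega c p Aset G)
  (s0 : simplex l0) (A0 : forall j, Aset (a0 j))
  (s1 : simplex l1) (A1 : forall k, Aset (a1 k)).

Let mu0 := mix l0 (fun j => a0 j : set T -> \bar R).
Let mu1 := mix l1 (fun k => a1 k : set T -> \bar R).
Let p_neq0 : p != 0%R. Proof. by rewrite gt_eqF // (lt_trans ltr01 p1). Qed.

Lemma plan_of_weights (w : 'M[R]_(J, K))
    (gs : 'I_J -> 'I_K -> probability (T * T)%type R)
    (g : probability (T * T)%type R) :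
  disc_feasible l0 l1 w ->
  (forall j k, opt_plans Omega c p (a0 j) (a1 k) (gs j k)) ->
  meq g (fun A => \sum_j \sum_k (w j k)%:E * gs j k A) ->
  [/\ couplings Omega mu0 mu1 g, Gamma_M Aset G g &
      cost Omega c p g = disc_obj Omega c p a0 a1 w].
Proof.
move=> w_feas gs_opt gE; have [w0 w_row w_col] := w_feas.
have gE' : meq g (fun A => \sum_(q : 'I_J * 'I_K) (w q.1 q.2)%:E * gs q.1 q.2 A).
  by move=> A mA; rewrite gE // pair_bigA.
have t0 (q : 'I_J * 'I_K) : (0 <= w q.1 q.2)%R by exact: w0.
have t1 := disc_feasible_sum s0 w_feas.
split.
- have := couplings_mixture (a := fun q => a0 q.1 : set T -> \bar R)
    (b := fun q => a1 q.2 : set T -> \bar R) mO t0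
    (fun q _ => (gs_opt q.1 q.2).1) gE'.
  apply: couplings_meq => A mA.
    rewrite -(pair_bigA _ (fun j k => (w j k)%:E * a0 j A)) /=.
    apply: eq_bigr => j _; rewrite -ge0_sume_distrl; last first.
      by move=> k _; rewrite lee_fin.
    by rewrite sumEFin w_row.
  rewrite -(pair_bigA _ (fun j k => (w j k)%:E * a1 k A)) exchange_big /=.
  apply: eq_bigr => k _.
  rewrite -ge0_sume_distrl; last by move=> j _; rewrite lee_fin.
  by rewrite sumEFin w_col.
- apply: (Gamma_M_mixture t0 t1 _ gE') => q.
  exists (a0 q.1), (a1 q.2); split=> //.
  by have [_ + _] := hadm (A0 q.1) (A1 q.2); apply.
- rewrite (cost_mixture p mO mc t0 gE') /disc_obj.
  rewrite -(pair_bigA _ (fun j k => (w j k)%:E * cost Omega c p (gs j k))).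
  apply: eq_bigr => j _; apply: eq_bigr => k _.
  by rewrite poweR_Wp // (gs_opt j k).2.
Qed.

Lemma exists_plan_of_weights (w : 'M[R]_(J, K)) : disc_feasible l0 l1 w ->
  exists g, [/\ couplings Omega mu0 mu1 g, Gamma_M Aset G g &
                cost Omega c p g = disc_obj Omega c p a0 a1 w].
Proof.
move=> hw; have [w0 _ _] := hw.
have /choice[gs gs_opt] : forall q : 'I_J * 'I_K,
    exists g, opt_plans Omega c p (a0 q.1) (a1 q.2) g by move=> q; exact: hopt.
have t0 (q : 'I_J * 'I_K) : (0 <= w q.1 q.2)%R by exact: w0.
have t1 := disc_feasible_sum s0 hw.
have [g gE] := mixture_probability_exists gs t0 t1.
exists g; apply: (plan_of_weights (gs := fun j k => gs (j, k)) hw).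
  by move=> j k; exact: (gs_opt (j, k)).
by move=> A mA; rewrite [LHS]gE pair_bigA; apply: eq_bigr => -[j k].
Qed.

Section Glued.
Variables (L : nat) (nu : 'I_L -> R) (gam : 'I_L -> probability (T * T)%type R)
  (b0 b1 : 'I_L -> probability T R) (g : probability (T * T)%type R).
Hypotheses (snu : simplex nu)
  (gam_c : forall l, couplings Omega (b0 l) (b1 l) (gam l))
  (gE : meq g (fun A => \sum_l (nu l)%:E * gam l A))
  (nu_l0 : forall x, class_weight meqb nu b0 x = class_weight meqb l0 a0 x)
  (nu_l1 : forall x, class_weight meqb nu b1 x = class_weight meqb l1 a1 x).

Let glue := glue_weight meqb nu b0 b1 l0 a0 l1 a1.
Let W : 'M[R]_(J, K) := (\matrix_(j, k) \sum_l glue l j k)%R.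
Let WE j k : W j k = (\sum_l glue l j k)%R. Proof. by rewrite mxE. Qed.
Let glue_ge0 l j k : (0 <= glue l j k)%R.
Proof. exact: (glue_weight_ge0 meqb b0 b1 a0 a1 snu.1 s0.1 s1.1). Qed.

Lemma glued_feasible : disc_feasible l0 l1 W.
Proof.
split=> [j k|j|k]; first by rewrite WE sumr_ge0.
  under eq_bigr do rewrite WE.
  exact: (sum_glue_weight_row meqb_refl meqb_sym meqb_trans snu.1 s0.1
    nu_l0 nu_l1).
under eq_bigr do rewrite WE.
exact: (sum_glue_weight_col meqb_refl meqb_sym meqb_trans snu.1 s1.1 nu_l0 nu_l1).
Qed.

Lemma disc_obj_glued :
  disc_obj Omega c p a0 a1 W = \sum_l (nu l)%:E * Wpp Omega c p (b0 l) (b1 l).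
Proof.
rewrite -(sume_glue_weight meqb_refl meqb_sym meqb_trans snu.1 s0.1 s1.1
  nu_l0 nu_l1 (H := fun l => Wpp Omega c p (b0 l) (b1 l))); last first.
  by move=> l; exact: Wpp_ge0.
rewrite -/glue; apply: eq_bigr => j _; apply: eq_bigr => k _.
rewrite poweR_Wp // WE -sumEFin ge0_sume_distrl; last first.
  by move=> l _; rewrite lee_fin glue_ge0.
apply: eq_bigr => l _.
have [->|] := eqVneq (glue l j k) 0%R; first by rewrite !mul0e.
move=> /glue_weight_neq0[/meqbP e0 /meqbP e1]; congr (_ * _).
by apply: Wpp_meq => A mA; rewrite ?e0 ?e1.
Qed.

Lemma disc_obj_glued_le_cost : disc_obj Omega c p a0 a1 W <= cost Omega c p g.
Proof.
rewrite disc_obj_glued (cost_mixture p mO mc snu.1 gE).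
apply: lee_sum => l _; apply: lee_wpmul2l; first by rewrite lee_fin snu.1.
by apply: ereal_inf_lbound; exists (gam l).
Qed.

Lemma opt_plans_of_cost_le : cost Omega c p g <= disc_obj Omega c p a0 a1 W ->
  cost Omega c p g < +oo ->
  forall l, (0 < nu l)%R -> opt_plans Omega c p (b0 l) (b1 l) (gam l).
Proof.
move=> cost_le cost_fin l nu_gt0; split=> //.
(* Termwise W_p^p <= cost, while the two weighted sums agree and are finite. *)
have Wpp_le l' : Wpp Omega c p (b0 l') (b1 l') <= cost Omega c p (gam l').
  by apply: ereal_inf_lbound; exists (gam l').
have nu_eq : (nu l)%:E * Wpp Omega c p (b0 l) (b1 l) =
             (nu l)%:E * cost Omega c p (gam l).
  apply: (@lee_sum_eq _ _ (fun l => (nu l)%:E * Wpp Omega c p (b0 l) (b1 l))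
    (fun l => (nu l)%:E * cost Omega c p (gam l))) => [l'|l'||].
  - by rewrite mule_ge0 ?lee_fin ?snu.1 ?Wpp_ge0.
  - by rewrite lee_wpmul2l ?lee_fin ?snu.1.
  - by rewrite -(cost_mixture p mO mc snu.1 gE).
  - by rewrite -(cost_mixture p mO mc snu.1 gE) -disc_obj_glued.
apply/le_anti; rewrite Wpp_le andbT.
by rewrite -(@lee_pmul2l _ (nu l)%:E) ?lte_fin // nu_eq.
Qed.

Lemma exists_opt_blocks :
  (forall l, (0 < nu l)%R -> opt_plans Omega c p (b0 l) (b1 l) (gam l)) ->
  exists gs : 'I_J -> 'I_K -> probability (T * T)%type R,
    (forall j k, opt_plans Omega c p (a0 j) (a1 k) (gs j k)) /\
    meq g (fun A => \sum_j \sum_k (W j k)%:E * gs j k A).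
Proof.
move=> gam_opt.
have block (q : 'I_J * 'I_K) : exists gq,
    opt_plans Omega c p (a0 q.1) (a1 q.2) gq /\ (W q.1 q.2 != 0%R ->
    meq gq (fun A => \sum_l (glue l q.1 q.2 / W q.1 q.2)%:E * gam l A)).
  case: q => j k /=; have [W0|W_neq0] := eqVneq (W j k) 0%R.
    by have [gq gq_opt] := hopt (A0 j) (A1 k); exists gq.
  have t0 l : (0 <= glue l j k / W j k)%R by rewrite divr_ge0 // WE sumr_ge0.
  have t1 : (\sum_l glue l j k / W j k = 1)%R by rewrite -mulr_suml -WE divff.
  have [gq gqE] := mixture_probability_exists gam t0 t1.
  exists gq; split=> [|_ A _]; last exact: gqE.
  apply: (opt_plans_mixture mO mc t0 t1 _ (fun A _ => gqE A)) => l glue_gt0.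
  have glue_neq0 : glue l j k != 0%R.
    by apply: contraTneq glue_gt0 => ->; rewrite mul0r ltxx.
  have nu_gt0 : (0 < nu l)%R.
    rewrite lt0r snu.1 andbT; apply: contraNneq glue_neq0 => nu0.
    by rewrite /glue /glue_weight nu0 !mul0r.
  have [/meqbP e0 /meqbP e1] := glue_weight_neq0 glue_neq0.
  exact: opt_plans_meq e0 e1 (gam_opt l nu_gt0).
have /choice[gs gsP] := block.
exists (fun j k => gs (j, k)); split=> [j k|A mA]; first exact: (gsP (j, k)).1.
rewrite gE // -(sume_glue_weight meqb_refl meqb_sym meqb_trans snu.1 s0.1 s1.1
  nu_l0 nu_l1 (H := fun l => gam l A)); last by move=> l; exact: measure_ge0.
rewrite -/glue; apply: eq_bigr => j _; apply: eq_bigr => k _.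
have [W0|W_neq0] := eqVneq (W j k) 0%R.
  rewrite W0 mul0e; apply: big1 => l _.
  suff -> : glue l j k = 0%R by rewrite mul0e.
  apply: (psumr_eq0P (P := xpredT) (fun l _ => glue_ge0 l j k)) => //.
  by rewrite -WE.
rewrite ((gsP (j, k)).2 W_neq0 A mA) ge0_sume_distrr; last first.
  by move=> l _; rewrite mule_ge0 // lee_fin divr_ge0 // WE sumr_ge0.
by apply: eq_bigr => l _; rewrite muleA -EFinM mulrC divfK.
Qed.

End Glued.

Lemma Gamma_M_coupling_split (g : probability (T * T)%type R) :
  couplings Omega mu0 mu1 g -> Gamma_M Aset G g ->
  exists L (nu : 'I_L -> R) (gam : 'I_L -> probability (T * T)%type R)
         (b0 b1 : 'I_L -> probability T R),
    [/\ simplex nu, (forall l, couplings Omega (b0 l) (b1 l) (gam l)),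
        meq g (fun A => \sum_l (nu l)%:E * gam l A),
        (forall x, class_weight meqb nu b0 x = class_weight meqb l0 a0 x) &
        (forall x, class_weight meqb nu b1 x = class_weight meqb l1 a1 x)].
Proof.
move=> [_ g_marg] [L [nu [gam [snu gamA gE]]]].
have /choice[bb bbP] : forall l, exists bb : probability T R * probability T R,
    [/\ Aset bb.1, Aset bb.2 & G bb.1 bb.2 (gam l)].
  by move=> l; have [b0 [b1 ?]] := gamA l; exists (b0, b1).
pose b0 l := (bb l).1; pose b1 l := (bb l).2.
have Ab0 l : Aset (b0 l) by case: (bbP l).
have Ab1 l : Aset (b1 l) by case: (bbP l).
have gam_c l : couplings Omega (b0 l) (b1 l) (gam l).
  by have [_ _] := hadm (Ab0 l) (Ab1 l); apply; case: (bbP l).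
have mix_b0 : meq (mix nu (fun l => b0 l : set T -> \bar R)) mu0.
  move=> A mA; rewrite -(g_marg A mA).1 gE; last exact: measurableX.
  by apply: eq_bigr => l _; rewrite ((gam_c l).2 A mA).1.
have mix_b1 : meq (mix nu (fun l => b1 l : set T -> \bar R)) mu1.
  move=> A mA; rewrite -(g_marg A mA).2 gE; last exact: measurableX.
  by apply: eq_bigr => l _; rewrite ((gam_c l).2 A mA).2.
exists L, nu, gam, b0, b1; split=> //.
- exact: (identifiable_class_weight hid snu s0 Ab0 A0 mix_b0).
- exact: (identifiable_class_weight hid snu s1 Ab1 A1 mix_b1).
Qed.

Lemma Gamma_M_plan_decompose (g : probability (T * T)%type R) :
  couplings Omega mu0 mu1 g -> Gamma_M Aset G g ->
  exists w : 'M[R]_(J, K),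
    [/\ disc_feasible l0 l1 w,
        disc_obj Omega c p a0 a1 w <= cost Omega c p g &
        cost Omega c p g <= disc_obj Omega c p a0 a1 w ->
        cost Omega c p g < +oo ->
        exists gs : 'I_J -> 'I_K -> probability (T * T)%type R,
          (forall j k, opt_plans Omega c p (a0 j) (a1 k) (gs j k)) /\
          meq g (fun A => \sum_j \sum_k (w j k)%:E * gs j k A)].
Proof.
move=> gc gM.
have [L [nu [gam [b0 [b1 [snu gam_c gE nu_l0 nu_l1]]]]]] :=
  Gamma_M_coupling_split gc gM.
eexists; split; first exact: (glued_feasible snu nu_l0 nu_l1).
  exact: (disc_obj_glued_le_cost snu gam_c gE nu_l0 nu_l1).
move=> cost_le cost_fin; apply: (exists_opt_blocks snu gE nu_l0 nu_l1).
exact: (opt_plans_of_cost_le snu gam_c gE nu_l0 nu_l1).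
Qed.

Lemma dM_pp_lt_pinfty : dM_pp Omega c p l0 a0 l1 a1 < +oo.
Proof.
have [l00 l0_1] := s0; have [l10 l1_1] := s1.
pose w : 'M[R]_(J, K) := (\matrix_(j, k) (l0 j * l1 k))%R.
have w_feas : disc_feasible l0 l1 w.
  split=> [j k|j|k]; first by rewrite mxE mulr_ge0.
    by under eq_bigr do rewrite mxE; rewrite -mulr_sumr l1_1 mulr1.
  by under eq_bigr do rewrite mxE; rewrite -mulr_suml l0_1 mul1r.
apply: (@le_lt_trans _ _ (disc_obj Omega c p a0 a1 w)).
  by apply: ereal_inf_lbound; exists w.
apply: lte_sum_pinfty => j _; apply: lte_sum_pinfty => k _.
rewrite poweR_Wp // lte_mul_pinfty ?lee_fin ?mxE ?mulr_ge0 //.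
have p0 : (0 <= p)%R by rewrite ltW // (lt_trans ltr01 p1).
by apply: (Wpp_lt_pinfty mO p0 hmet mc); apply: hP.
Qed.

Lemma dtilde_pp_eq_dM_pp :
  dtilde_pp Omega c p Aset G mu0 mu1 = dM_pp Omega c p l0 a0 l1 a1.
Proof.
apply/le_anti/andP; split; apply/ereal_infP.
  move=> _ [w w_feas <-]; have [g [gc gM <-]] := exists_plan_of_weights w_feas.
  by apply: ereal_inf_lbound; exists g.
move=> _ [g [gc gM] <-].
have [w [w_feas w_le _]] := Gamma_M_plan_decompose gc gM.
by apply: le_trans w_le; apply: ereal_inf_lbound; exists w.
Qed.

Lemma dtilde_minimizerP (g : probability (T * T)%type R) :
  dtilde_minimizer Omega c p Aset G mu0 mu1 g <->
  exists w : 'M[R]_(J, K),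
    disc_minimizer Omega c p l0 a0 l1 a1 w /\
    exists gs : 'I_J -> 'I_K -> probability (T * T)%type R,
      (forall j k, opt_plans Omega c p (a0 j) (a1 k) (gs j k)) /\
      meq g (fun A => \sum_j \sum_k (w j k)%:E * gs j k A).
Proof.
split=> [[gc gM g_min]|[w [[w_feas w_min] [gs [gs_opt gE]]]]]; last first.
  have [gc gM g_cost] := plan_of_weights w_feas gs_opt gE.
  by split=> //; rewrite g_cost w_min dtilde_pp_eq_dM_pp.
have [w [w_feas w_le w_opt]] := Gamma_M_plan_decompose gc gM.
have cost_dM : cost Omega c p g = dM_pp Omega c p l0 a0 l1 a1.
  by rewrite g_min dtilde_pp_eq_dM_pp.
have w_min : disc_obj Omega c p a0 a1 w = dM_pp Omega c p l0 a0 l1 a1.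
  apply/le_anti; rewrite -{1}cost_dM w_le /=.
  by apply: ereal_inf_lbound; exists w.
exists w; split=> //; apply: w_opt; first by rewrite cost_dM w_min.
by rewrite cost_dM; exact: dM_pp_lt_pinfty.
Qed.

End Transport.

Theorem mainTheorem3 (R : realType) (d : nat) (Omega : set (Rd R d))
  (p : R) (c : Rd R d -> Rd R d -> R)
  (Aset : set (probability (Rd R d) R))
  (G : probability (Rd R d) R -> probability (Rd R d) R ->
       set (probability (Rd R d * Rd R d)%type R))
  (J K : nat) (l0 : 'I_J -> R) (a0 : 'I_J -> probability (Rd R d) R)
  (l1 : 'I_K -> R) (a1 : 'I_K -> probability (Rd R d) R) :
  measurable Omega ->
  1 < p ->
  metric_on Omega c ->
  measurable_fun (Omega `*` Omega) (fun z : Rd R d * Rd R d => c z.1 z.2) ->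
  Aset `<=` Pcp Omega c p ->
  (forall b0 b1, Aset b0 -> Aset b1 ->
     exists g, opt_plans Omega c p b0 b1 g) ->
  identifiable Aset ->
  admissible Omega c p Aset G ->
  simplex l0 -> (forall j, Aset (a0 j)) ->
  simplex l1 -> (forall k, Aset (a1 k)) ->
  let mu0 := mix l0 (fun j => a0 j : set (Rd R d) -> \bar R) in
  let mu1 := mix l1 (fun k => a1 k : set (Rd R d) -> \bar R) in
  dtilde Omega c p Aset G mu0 mu1 = dM Omega c p l0 a0 l1 a1 /\
  (forall g : probability (Rd R d * Rd R d)%type R,
     dtilde_minimizer Omega c p Aset G mu0 mu1 g <->
     exists w : 'M[R]_(J, K),
       disc_minimizer Omega c p l0 a0 l1 a1 w /\
       exists gs : 'I_J -> 'I_K -> probability (Rd R d * Rd R d)%type R,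
         (forall j k, opt_plans Omega c p (a0 j) (a1 k) (gs j k)) /\
         meq g (fun A => (\sum_(j < J) \sum_(k < K)
                             (w j k)%:E * gs j k A)%E)).
Proof.
move=> mO p1 hmet mc hP hopt hid hadm s0 A0 s1 A1 mu0 mu1; split.
  by rewrite /dtilde /dM (dtilde_pp_eq_dM_pp mO p1 mc hopt hid hadm s0 A0 s1 A1).
exact: (dtilde_minimizerP mO p1 hmet mc hP hopt hid hadm s0 A0 s1 A1).
Qed.
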